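(* Let $M$ be an exact $\mathfrak{K}$-module. Then there are isomorphisms $\ker(1-t_2)/\ker\alpha_{02}\cong\ker N(s_1)/\ker\alpha_{01}$, $\operatorname{im}\alpha_{20}/\operatorname{im}(1-t_2)\cong\operatorname{im}\alpha_{10}/\operatorname{im}N(s_1)$, $\ker(1-t_0)/\ker\alpha_{20}\cong\ker(1-s_1)/\ker\alpha_{21}$, $\operatorname{im}\alpha_{02}/\operatorname{im}(1-t_0)\cong\operatorname{im}\alpha_{12}/\operatorname{im}(1-s_1)$, $\ker N(t_0)/\ker\alpha_{10}\cong\ker(1-s_2)/\ker\alpha_{12}$, $\operatorname{im}\alpha_{01}/\operatorname{im}N(t_0)\cong\operatorname{im}\alpha_{21}/\operatorname{im}(1-s_2)$; in particular, for each quotient $X/Y$ above, $Y\subseteq X$.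
   Context: Fix a prime $p$ and let $N(x)=1+x+\dots+x^{p-1}$. A ($\mathbb{Z}/2$-graded) $\mathfrak{K}$-module $M$ amounts to $\mathbb{Z}/2$-graded abelian groups $M_0,M_1,M_2$ with homomorphisms $\alpha_{jk}=\alpha^M_{jk}\colon M_k\to M_j$ for $j\ne k$ in $\{0,1,2\}$ ($\alpha_{12},\alpha_{21}$ grading-reversing, the others grading-preserving) such that $\alpha_{jk}\circ\alpha_{km}=0$ whenever $\{j,k,m\}=\{0,1,2\}$ and, writing $t_0:=1-\alpha_{02}\alpha_{20}$ on $M_0$, $s_1:=1-\alpha_{12}\alpha_{21}$ on $M_1$, $t_2:=1-\alpha_{20}\alpha_{02}$ and $s_2:=1-\alpha_{21}\alpha_{12}$ on $M_2$: $\alpha_{01}\alpha_{10}=N(t_0)$, $\alpha_{10}\alpha_{01}=N(s_1)$, $N(t_2)+N(s_2)=p\cdot\mathrm{id}_{M_2}$. (This is the module-level form of the presentation of Köhler's ring $\mathfrak{K}$.) $M$ is exact if the cyclic sequences $M_0\xrightarrow{\alpha_{10}}M_1\xrightarrow{\alpha_{21}}M_2\xrightarrow{\alpha_{02}}M_0$ and $M_0\xrightarrow{\alpha_{20}}M_2\xrightarrow{\alpha_{12}}M_1\xrightarrow{\alpha_{01}}M_0$ are exact at every place. *)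

From HB Require Import structures.
From mathcomp Require Import all_boot all_order all_algebra.
Set Implicit Arguments. Unset Strict Implicit. Unset Printing Implicit Defensive.
Import GRing.Theory.
Local Open Scope ring_scope.

(* A Z/2-graded abelian group: an abelian group V together with the two
   projections gpr false (onto the even part) and gpr true (onto the odd part)
   of a direct sum decomposition V = V^0 (+) V^1. *)
Record grZmod := GrZmod {
  gcar :> zmodType;
  gpr : bool -> {additive gcar -> gcar};
  gpr_sum : forall x, gpr false x + gpr true x = x;
  gpr_idem : forall d x, gpr d (gpr d x) = gpr d x;
  gpr_orth : forall d x, gpr d (gpr (~~ d) x) = 0 }.

Definition homog (U V : grZmod) (b : bool) (f : U -> V) : Prop :=
  forall d x, f (gpr U d x) = gpr V (addb d b) (f x).

Definition Nf (p : nat) (V : zmodType) (f : V -> V) (x : V) : V :=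
  \sum_(i < p) iter i f x.

Record Kdata := KData {
  KM0 : grZmod; KM1 : grZmod; KM2 : grZmod;
  a01 : {additive KM1 -> KM0}; a10 : {additive KM0 -> KM1};
  a02 : {additive KM2 -> KM0}; a20 : {additive KM0 -> KM2};
  a12 : {additive KM2 -> KM1}; a21 : {additive KM1 -> KM2} }.

Section KOps.
Variable M : Kdata.
Definition t0 (x : KM0 M) : KM0 M := x - a02 M (a20 M x).
Definition s1 (x : KM1 M) : KM1 M := x - a12 M (a21 M x).
Definition t2 (x : KM2 M) : KM2 M := x - a20 M (a02 M x).
Definition s2 (x : KM2 M) : KM2 M := x - a21 M (a12 M x).
End KOps.

Definition is_Kmodule (p : nat) (M : Kdata) : Prop :=
  [/\ (homog false (a01 M) /\ homog false (a10 M) /\ homog false (a02 M) /\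
       homog false (a20 M) /\ homog true (a12 M) /\ homog true (a21 M)),
      ((forall x, a01 M (a12 M x) = 0) /\ (forall x, a02 M (a21 M x) = 0) /\
       (forall x, a10 M (a02 M x) = 0) /\ (forall x, a12 M (a20 M x) = 0) /\
       (forall x, a20 M (a01 M x) = 0) /\ (forall x, a21 M (a10 M x) = 0)),
      forall x, a01 M (a10 M x) = Nf p (@t0 M) x,
      forall x, a10 M (a01 M x) = Nf p (@s1 M) x &
      forall x, Nf p (@t2 M) x + Nf p (@s2 M) x = x *+ p].

Definition kerP (U V : zmodType) (f : U -> V) : U -> Prop := fun x => f x = 0.
Definition imP (U V : zmodType) (f : U -> V) : V -> Prop :=
  fun y => exists x, f x = y.

Definition exact_at (U V W : zmodType) (f : U -> V) (g : V -> W) : Prop :=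
  forall y, kerP g y <-> imP f y.

Definition is_exact (M : Kdata) : Prop :=
  exact_at (a10 M) (a21 M) /\ exact_at (a21 M) (a02 M) /\
  exact_at (a02 M) (a10 M) /\ exact_at (a20 M) (a12 M) /\
  exact_at (a12 M) (a01 M) /\ exact_at (a01 M) (a20 M).

Definition subP (U : Type) (Y X : U -> Prop) : Prop := forall x, Y x -> X x.

(* The subquotient X/(X ∩ Y) of U is isomorphic, by a graded isomorphism of
   degree b, to X'/(X' ∩ Y') of V.  Such an isomorphism is given through a
   choice of representatives: a map f from X to X' which is additive modulo Y',
   well defined and injective (f x ∈ Y' iff x ∈ Y), surjective modulo Y', and
   compatible with the grading projections modulo Y'. *)
Definition sq_iso (U V : grZmod) (b : bool)
    (X Y : U -> Prop) (X' Y' : V -> Prop) : Prop :=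
  exists f : U -> V,
  [/\ forall x, X x -> X' (f x),
      forall x y, X x -> X y -> Y' (f (x + y) - f x - f y),
      forall x, X x -> (Y' (f x) <-> Y x),
      forall x', X' x' -> exists2 x, X x & Y' (f x - x')
    & forall d x, X x -> Y' (f (gpr U d x) - gpr V (addb d b) (f x))].

Definition oneM (V : zmodType) (f : V -> V) (x : V) : V := x - f x.

(* Exactness identifies both subquotients of each pair with a third group.
   Since 1 - t2 = α20 α02 and N(s1) = α10 α01, the group ker(1 - t2)/ker α02
   is carried by α02 onto im α02 ∩ ker α20 = im α02 ∩ im α01, and
   ker N(s1)/ker α01 is carried by α01 onto im α01 ∩ ker α10, the same group.
   Dually, im α20/im(1 - t2) and im α10/im N(s1) are both quotients of M0 by
   im α01 + im α02.  The other four isomorphisms are the same argument with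
   M2, respectively M1, in place of M0. *)
From mathcomp Require Import all_boot all_order all_algebra.
From Stdlib Require Import ClassicalEpsilon.

Set Implicit Arguments.
Unset Strict Implicit.
Unset Printing Implicit Defensive.
Local Open Scope ring_scope.
Import GRing.Theory.

Lemma exists_section_on (T : Type) (V : zmodType) (X : T -> Prop)
    (R : T -> V -> Prop) :
  (forall x, X x -> exists y, R x y) -> exists f : T -> V, forall x, X x -> R x (f x).
Proof.
move=> exR; exists (fun x => epsilon (inhabits 0) (R x)) => x /exR.
exact: epsilon_spec.
Qed.

Lemma imPD (U V : zmodType) (f : {additive U -> V}) (y z : V) :
  imP f y -> imP f z -> imP f (y + z).
Proof. by move=> [u <-] [v <-]; exists (u + v); rewrite raddfD. Qed.

Lemma imP_gpr (U V : grZmod) (b : bool) (f : U -> V) (d : bool) (y : V) :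
  homog b f -> imP f y -> imP f (gpr V d y).
Proof. by move=> hf [x <-]; exists (gpr U (addb d b) x); rewrite hf addbK. Qed.

Section PullbackIso.

Variables (U V W : grZmod) (a b : bool).
Variables (A : {additive U -> W}) (B : {additive V -> W}).
Hypotheses (hA : homog a A) (hB : homog b B).

Lemma sq_iso_pullback (X : U -> Prop) (X' : V -> Prop) :
  (forall x, X x <-> imP B (A x)) -> (forall y, X' y <-> imP A (B y)) ->
  sq_iso (addb a b) X (kerP A) X' (kerP B).
Proof.
move=> HX HX'.
have [f Bf] : exists f : U -> V, forall x, X x -> B (f x) = A x.
  by apply: (exists_section_on (R := fun x y => B y = A x)) => x /HX.
have X_add x y : X x -> X y -> X (x + y).
  by rewrite !HX raddfD; apply: imPD.
have X_gpr d x : X x -> X (gpr U d x).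
  by rewrite !HX hA; apply: imP_gpr hB.
exists f; split.
- by move=> x Xx; apply/HX'; exists x; rewrite Bf.
- move=> x y Xx Xy; have Xxy := X_add x y Xx Xy.
  by rewrite /kerP !raddfB !Bf // raddfD addrAC addrK subrr.
- by move=> x Xx; rewrite /kerP Bf.
- move=> x' /HX' [x Ax]; have Xx : X x by apply/HX; exists x'.
  by exists x => //; rewrite /kerP raddfB Bf // Ax subrr.
- move=> d x Xx; have Xdx := X_gpr d x Xx.
  by rewrite /kerP raddfB Bf // hB Bf // hA addbA addbK subrr.
Qed.

End PullbackIso.

Section CommonSourceIso.

Variables (W U V : grZmod) (a b : bool).
Variables (A : {additive W -> U}) (B : {additive W -> V}).
Hypotheses (hA : homog a A) (hB : homog b B).

Lemma sq_iso_common_source (Y : U -> Prop) (Y' : V -> Prop) :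
  Y 0 -> (forall w, Y (A w) <-> Y' (B w)) ->
  sq_iso (addb a b) (imP A) Y (imP B) Y'.
Proof.
move=> Y0 YAB.
have [u Au] : exists u : U -> W, forall x, imP A x -> A (u x) = x.
  exact: (exists_section_on (R := fun x w => A w = x)).
have Y'_ker w : A w = 0 -> Y' (B w) by move=> Aw0; rewrite -YAB Aw0.
exists (B \o u); split => /=.
- by move=> x _; exists (u x).
- move=> x y Ax Ay; have Axy := imPD Ax Ay.
  by rewrite -!raddfB; apply: Y'_ker; rewrite !raddfB !Au // addrAC addrK subrr.
- by move=> x Ax; rewrite -YAB Au.
- move=> _ [w <-]; exists (A w); first by exists w.
  by rewrite -raddfB; apply: Y'_ker; rewrite raddfB Au ?subrr //; exists w.
- move=> d x Ax; have Adx := imP_gpr d hA Ax.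
  rewrite addbA -hB -raddfB; apply: Y'_ker.
  by rewrite raddfB hA Au // addbK Au // subrr.
Qed.

End CommonSourceIso.

Section ExactComposites.

Variables (U V W P Q : grZmod).
Variables (A : {additive U -> W}) (B : {additive V -> W}).
Variables (C : {additive W -> P}) (D : {additive W -> Q}).
Variables (F : U -> P) (G : V -> Q).
Hypotheses (exBC : exact_at B C) (exAD : exact_at A D).
Hypotheses (defF : F =1 C \o A) (defG : G =1 D \o B).

Lemma sq_iso_ker_comp (a b : bool) :
  homog a A -> homog b B ->
  sq_iso (addb a b) (kerP F) (kerP A) (kerP G) (kerP B).
Proof.
move=> hA hB; apply: (sq_iso_pullback hA hB) => [x | y]; rewrite /kerP.
  by rewrite defF; exact: exBC.
by rewrite defG; exact: exAD.
Qed.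

Lemma imP_comp_exact w : imP F (C w) <-> exists u v, A u + B v = w.
Proof.
split=> [[u Fu] | [u [v <-]]].
  have [v Bv] : imP B (w - A u) by apply/exBC; rewrite /kerP raddfB -Fu defF subrr.
  by exists u, v; rewrite Bv addrC subrK.
have CB0 : C (B v) = 0 by apply/exBC; exists v.
by exists u; rewrite defF raddfD CB0 addr0.
Qed.

Lemma imP_comp_exact_sym w : imP G (D w) <-> exists u v, A u + B v = w.
Proof.
split=> [[v Gv] | [u [v <-]]].
  have [u Au] : imP A (w - B v) by apply/exAD; rewrite /kerP raddfB -Gv defG subrr.
  by exists u, v; rewrite Au subrK.
have DA0 : D (A u) = 0 by apply/exAD; exists u.
by exists v; rewrite defG raddfD DA0 add0r.
Qed.

Lemma sq_iso_im_comp (c d : bool) :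
  homog c C -> homog d D ->
  sq_iso (addb c d) (imP C) (imP F) (imP D) (imP G).
Proof.
move=> hC hD; apply: (sq_iso_common_source hC hD) => [|w].
  by exists 0; rewrite defF /= !raddf0.
by rewrite imP_comp_exact imP_comp_exact_sym.
Qed.

Lemma subP_kerP_comp : subP (kerP A) (kerP F).
Proof. by move=> x Ax0; rewrite /kerP defF /= Ax0 raddf0. Qed.

Lemma subP_imP_comp : subP (imP F) (imP C).
Proof. by move=> _ [x <-]; exists (A x); rewrite defF. Qed.

End ExactComposites.

Lemma oneM_sub (V : zmodType) (f : V -> V) : oneM (fun x => x - f x) =1 f.
Proof. by move=> x; rewrite /oneM opprB addrC subrK. Qed.

Theorem lemma5p15 (p : nat) (M : Kdata) :
  prime p -> is_Kmodule p M -> is_exact M ->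
  (* the six isomorphisms of subquotients *)
  (sq_iso false (kerP (oneM (@t2 M))) (kerP (a02 M))
                (kerP (Nf p (@s1 M))) (kerP (a01 M)) /\
   sq_iso false (imP (a20 M)) (imP (oneM (@t2 M)))
                (imP (a10 M)) (imP (Nf p (@s1 M))) /\
   sq_iso true (kerP (oneM (@t0 M))) (kerP (a20 M))
               (kerP (oneM (@s1 M))) (kerP (a21 M)) /\
   sq_iso true (imP (a02 M)) (imP (oneM (@t0 M)))
               (imP (a12 M)) (imP (oneM (@s1 M))) /\
   sq_iso true (kerP (Nf p (@t0 M))) (kerP (a10 M))
               (kerP (oneM (@s2 M))) (kerP (a12 M)) /\
   sq_iso true (imP (a01 M)) (imP (Nf p (@t0 M)))
               (imP (a21 M)) (imP (oneM (@s2 M)))) /\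
  (* for each quotient X/Y above, Y is contained in X *)
  (subP (kerP (a02 M)) (kerP (oneM (@t2 M))) /\
   subP (kerP (a01 M)) (kerP (Nf p (@s1 M))) /\
   subP (imP (oneM (@t2 M))) (imP (a20 M)) /\
   subP (imP (Nf p (@s1 M))) (imP (a10 M)) /\
   subP (kerP (a20 M)) (kerP (oneM (@t0 M))) /\
   subP (kerP (a21 M)) (kerP (oneM (@s1 M))) /\
   subP (imP (oneM (@t0 M))) (imP (a02 M)) /\
   subP (imP (oneM (@s1 M))) (imP (a12 M)) /\
   subP (kerP (a10 M)) (kerP (Nf p (@t0 M))) /\
   subP (kerP (a12 M)) (kerP (oneM (@s2 M))) /\
   subP (imP (Nf p (@t0 M))) (imP (a01 M)) /\
   subP (imP (oneM (@s2 M))) (imP (a21 M))).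
Proof.
move=> _ [[h01 [h10 [h02 [h20 [h12 h21]]]]] _ N_t0 N_s1 _] [e1 [e2 [e3 [e4 [e5 e6]]]]].
have N0 : Nf p (@t0 M) =1 a01 M \o a10 M by move=> x /=; rewrite N_t0.
have N1 : Nf p (@s1 M) =1 a10 M \o a01 M by move=> x /=; rewrite N_s1.
have o0 : oneM (@t0 M) =1 a02 M \o a20 M by exact: oneM_sub.
have o1 : oneM (@s1 M) =1 a12 M \o a21 M by exact: oneM_sub.
have o2 : oneM (@t2 M) =1 a20 M \o a02 M by exact: oneM_sub.
have o3 : oneM (@s2 M) =1 a21 M \o a12 M by exact: oneM_sub.
split.
  split; [|split; [|split; [|split; [|split]]]].
  - exact (sq_iso_ker_comp e6 e3 o2 N1 h02 h01).
  - exact (sq_iso_im_comp e6 e3 o2 N1 h20 h10).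
  - exact (sq_iso_ker_comp e2 e4 o0 o1 h20 h21).
  - exact (sq_iso_im_comp e2 e4 o0 o1 h02 h12).
  - exact (sq_iso_ker_comp e5 e1 N0 o3 h10 h12).
  - exact (sq_iso_im_comp e5 e1 N0 o3 h01 h21).
split; first exact: subP_kerP_comp o2.
split; first exact: subP_kerP_comp N1.
split; first exact: subP_imP_comp o2.
split; first exact: subP_imP_comp N1.
split; first exact: subP_kerP_comp o0.
split; first exact: subP_kerP_comp o1.
split; first exact: subP_imP_comp o0.
split; first exact: subP_imP_comp o1.
split; first exact: subP_kerP_comp N0.
split; first exact: subP_kerP_comp o3.
split; first exact: subP_imP_comp N0.
exact: subP_imP_comp o3.
Qed.
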